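(* Let $(z,x)$ be a feasible solution of the cluster LP on a finite vertex set $V$. For $u,v,w\in V$ define $y_{uv}=\sum_{S\supseteq\{u,v\}}z_S$ and $y_{uvw}=\sum_{S\supseteq\{u,v,w\}}z_S$. Then for any three distinct vertices $u,v,w$, $$3y_{uvw}\le y_{uv}+y_{uw}+y_{vw}\le\tfrac32+\tfrac32 y_{uvw}.$$
   Context: The cluster LP for a finite vertex set $V$ has a variable $z_S$ for every nonempty $S\subseteq V$ and $x_{uv}$ for every unordered pair $uv$ of distinct vertices, with constraints $\sum_{S\ni u}z_S=1$ for all $u\in V$, $\sum_{S\supseteq\{u,v\}}z_S=1-x_{uv}$ for all $uv$, and $z_S\ge0$. *)

From mathcomp Require Import all_boot all_order all_algebra.
Set Implicit Arguments. Unset Strict Implicit. Unset Printing Implicit Defensive.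
Import Order.TTheory GRing.Theory Num.Theory.
Local Open Scope ring_scope.

(* Cluster LP on a finite vertex set V: variables z_S for nonempty S ⊆ V
   (represented by z : {set V} -> R, the value at set0 being irrelevant)
   and x_{uv} for unordered pairs (represented by x : V -> V -> R, used
   only at u != v). *)
Definition cluster_LP_feasible (R : realFieldType) (V : finType)
    (z : {set V} -> R) (x : V -> V -> R) : Prop :=
  [/\ (forall u : V, \sum_(S : {set V} | (S != set0) && (u \in S)) z S = 1),
      (forall u v : V, u != v ->
         \sum_(S : {set V} | (S != set0) && ([set u; v] \subset S)) z S = 1 - x u v)
    & (forall S : {set V}, S != set0 -> 0 <= z S)].

Definition y2 (R : realFieldType) (V : finType) (z : {set V} -> R) (u v : V) : R :=
  \sum_(S : {set V} | [set u; v] \subset S) z S.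

Definition y3 (R : realFieldType) (V : finType) (z : {set V} -> R) (u v w : V) : R :=
  \sum_(S : {set V} | [set u; v; w] \subset S) z S.

(* Write [a], [b], [c] for the indicators of [u], [v], [w] lying in a cluster [S].
   Each cluster contributes [z_S] times [ab + ac + bc] to the pair sum and [z_S]
   times [abc] to [y_uvw]; since every vertex is covered with total weight one,
   the constant [3/2] is [z]-weighted [(a + b + c)/2]. Both inequalities then
   hold cluster by cluster, by the Boolean inequalities
   [3abc <= ab + ac + bc <= (a + b + c)/2 + 3abc/2], and [z_S >= 0] on every
   cluster meeting [{u, v, w}]. *)

From mathcomp Require Import all_boot all_order all_algebra.
From mathcomp Require Import ring lra.
Set Implicit Arguments. Unset Strict Implicit. Unset Printing Implicit Defensive.
Import Order.TTheory GRing.Theory Num.Theory.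
Local Open Scope ring_scope.

Lemma big_mkcond_natr (R : pzSemiRingType) (I : finType) (P : pred I) (F : I -> R) :
  \sum_(i | P i) F i = \sum_i F i * (P i)%:R.
Proof. by rewrite big_mkcond; apply: eq_bigr => i _; case: (P i); rewrite ?mulr1 ?mulr0. Qed.

Lemma weighted_membership_bounds (R : realFieldType) (t : R) (a b c : bool) :
  (a || b || c -> 0 <= t) ->
  3%:R * (t * [&& a, b & c]%:R) <= t * (a && b)%:R + t * (a && c)%:R + t * (b && c)%:R /\
  t * (a && b)%:R + t * (a && c)%:R + t * (b && c)%:R
    <= 1 / 2%:R * (t * a%:R) + 1 / 2%:R * (t * b%:R) + 1 / 2%:R * (t * c%:R)
       + 3%:R / 2%:R * (t * [&& a, b & c]%:R).
Proof.
case: a b c => [] [] [] /= t_ge0; rewrite ?mulr0 ?mulr1; last by split; lra.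
all: by have := t_ge0 isT; split; lra.
Qed.

Section ClusterLP.

Variables (R : realFieldType) (V : finType) (z : {set V} -> R).

Lemma y2E u v : y2 z u v = \sum_S z S * ((u \in S) && (v \in S))%:R.
Proof. by rewrite /y2 [LHS]big_mkcond_natr; apply: eq_bigr => S _; rewrite subUset !sub1set. Qed.

Lemma y3E u v w : y3 z u v w = \sum_S z S * [&& u \in S, v \in S & w \in S]%:R.
Proof.
by rewrite /y3 [LHS]big_mkcond_natr; apply: eq_bigr => S _; rewrite !subUset !sub1set andbA.
Qed.

Lemma feasible_cover x : cluster_LP_feasible z x ->
  forall u, \sum_S z S * (u \in S)%:R = 1.
Proof.
case=> cover _ _ u; rewrite -[RHS](cover u) [RHS]big_mkcond_natr; apply: eq_bigr => S _.
have [uS|] := boolP (u \in S); last by rewrite andbF.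
suff -> : S != set0 by [].
by apply/set0Pn; exists u.
Qed.

End ClusterLP.

Theorem lemma17 (R : realFieldType) (V : finType)
    (z : {set V} -> R) (x : V -> V -> R)
    (feas : cluster_LP_feasible z x) (u v w : V)
    (huv : u != v) (huw : u != w) (hvw : v != w) :
  3%:R * y3 z u v w <= y2 z u v + y2 z u w + y2 z v w /\
  y2 z u v + y2 z u w + y2 z v w <= 3%:R / 2%:R + 3%:R / 2%:R * y3 z u v w.
Proof.
have [_ _ z_ge0] := feas.
have meets_ge0 (S : {set V}) : (u \in S) || (v \in S) || (w \in S) -> 0 <= z S.
  move=> uvw_S; apply/z_ge0/set0Pn.
  by case/orP: uvw_S => [/orP[]|] ?; eexists; eassumption.
have bounds S := weighted_membership_bounds (meets_ge0 S).
have cover := feasible_cover feas.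
rewrite !y2E; split.
  rewrite y3E mulr_sumr -!big_split /=.
  by apply: ler_sum => S _; case: (bounds S).
have -> : 3%:R / 2%:R + 3%:R / 2%:R * y3 z u v w =
    \sum_S (1 / 2%:R * (z S * (u \in S)%:R) + 1 / 2%:R * (z S * (v \in S)%:R)
             + 1 / 2%:R * (z S * (w \in S)%:R)
             + 3%:R / 2%:R * (z S * [&& u \in S, v \in S & w \in S]%:R)).
  by rewrite !big_split -!mulr_sumr /= !cover y3E; field.
rewrite -!big_split /=.
by apply: ler_sum => S _; case: (bounds S).
Qed.
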